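(* Let $(G,H)$ be a discrete Hecke pair which has a finite generating set $S$. If $(G,H)$ is of subexponential growth (with respect to a length function $l$ on $(G,H)$), then $(G,H)$ is amenable.
   Context: A discrete Hecke pair is a group $G$ with a subgroup $H$ such that $[H:H\cap xHx^{-1}]<\infty$ for all $x$. $S\subseteq G$ generates $(G,H)$ if $H\backslash G=\bigcup_nH\hat S^n$, $\hat S=S\cup S^{-1}\cup\{e\}$. A length function on $(G,H)$ is $l:G\to[0,\infty)$ with $l(e)=0$, $l(g)=l(g^{-1})$, $l(gh)\le l(g)+l(h)$ and $l|_H=0$. Its growth function is $\mathcal G_l(r)=\#\{Hx\in H\backslash G: l(x)\le r\}$. $(G,H)$ has subexponential growth with respect to $l$ if $\mathcal G_l(r)<\infty$ for all $r\ge0$ and $\lim_{r\to\infty}\frac{\ln\mathcal G_l(r)}{r}=0$. The pair $(G,H)$ is amenable if whenever $G$ acts continuously by affine transformations on a compact convex subset $Q$ of a locally convex topological vector space and the restricted action of $H$ has a fixed point in $Q$, the action of $G$ has a fixed point in $Q$. *)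

From HB Require Import structures.
From mathcomp Require Import all_boot all_order all_algebra.
From mathcomp Require Import finmap.
From mathcomp Require Import all_classical all_reals all_analysis.
Set Implicit Arguments. Unset Strict Implicit. Unset Printing Implicit Defensive.
Import Order.TTheory GRing.Theory Num.Theory numFieldNormedType.Exports.
Local Open Scope classical_set_scope.
Local Open Scope ring_scope.

Section HeckeDefs.
Variable G : groupType.

Definition is_subgroup (H : set G) : Prop :=
  H 1%g /\ (forall x y, H x -> H y -> H (x * y)%g) /\ (forall x, H x -> H (x^-1)%g).

Definition rcoset (H : set G) (x : G) : set G := [set (h * x)%g | h in H].
Definition lcoset (x : G) (K : set G) : set G := [set (x * k)%g | k in K].

Definition conj_inter (H : set G) (x : G) : set G :=
  H `&` [set (x * h * x^-1)%g | h in H].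

(* [H : H ∩ x H x^{-1}] < oo for all x *)
Definition hecke_pair (H : set G) : Prop :=
  is_subgroup H /\
  forall x : G, finite_set [set C | exists2 h, H h & C = lcoset h (conj_inter H x)].

Definition symm_hat (S : set G) : set G :=
  S `|` [set (s^-1)%g | s in S] `|` [set 1%g].

Definition word_pow (T : set G) (n : nat) : set G :=
  [set x | exists s : seq G,
     [/\ size s = n, (forall y, y \in s -> T y) & x = (\prod_(y <- s) y)%g]].

Definition generates_pair (H S : set G) : Prop :=
  forall x : G, exists n, exists2 w, word_pow (symm_hat S) n w & rcoset H x = rcoset H w.

Variable R : realType.

Definition length_function (H : set G) (l : G -> R) : Prop :=
  [/\ l 1%g = 0,
      (forall g, 0 <= l g),
      (forall g, l (g^-1)%g = l g),
      (forall g h, l (g * h)%g <= l g + l h) &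
      (forall h, H h -> l h = 0)].

Definition ball_cosets (H : set G) (l : G -> R) (r : R) : set (set G) :=
  [set C | exists2 x, l x <= r & C = rcoset H x].

(* growth function G_l(r) (meaningful when the set above is finite) *)
Definition growth (H : set G) (l : G -> R) (r : R) : nat :=
  (#|` fset_set (ball_cosets H l r)|)%fset.

Definition subexponential_growth (H : set G) (l : G -> R) : Prop :=
  (forall r, 0 <= r -> finite_set (ball_cosets H l r)) /\
  (fun r => ln ((growth H l r)%:R) / r) @ +oo --> (0 : R).

Definition affine_on (E : tvsType R) (Q : set E) (f : E -> E) : Prop :=
  forall x y (t : R), Q x -> Q y -> 0 <= t <= 1 ->
    f (t *: x + (1 - t) *: y) = t *: f x + (1 - t) *: f y.

Definition affine_action (E : tvsType R) (Q : set E) (a : G -> E -> E) : Prop :=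
  [/\ (forall g x, Q x -> Q (a g x)),
      (forall x, Q x -> a 1%g x = x),
      (forall g h x, Q x -> a (g * h)%g x = a g (a h x)),
      (forall g, {within Q, continuous (a g)}) &
      (forall g, affine_on Q (a g))].

Definition amenable_pair (H : set G) : Prop :=
  forall (E : tvsType R), hausdorff_space E ->
  forall (Q : set E), compact Q -> convex_set (Q : set (convex_lmodType E)) ->
  forall a : G -> E -> E, affine_action Q a ->
  (exists2 q, Q q & forall h, H h -> a h q = q) ->
  exists2 q, Q q & forall g, a g q = q.

End HeckeDefs.

(* Averaging the orbit map Hx |-> x^-1 q0 (well defined as H fixes q0) over the
   coset ball {Hx : l x <= r} gives a point q_r of the compact convex set Q. Right
   translation by g^-1 maps this ball into the ball of radius r + l g, so
   g q_r = q_r + (k / N r) (u - v) with u, v in Q and k <= N (r + l g) - N r, where N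
   is the growth function. Subexponential growth forbids N (r + c) > (1 + eps) N r for
   all r, which yields radii along which these displacements vanish for every g; an
   ultrafilter limit of the corresponding q_r is then fixed by all of G. *)

From HB Require Import structures.
From mathcomp Require Import all_boot all_order all_algebra finmap.
From mathcomp Require Import all_classical all_reals all_analysis.
From mathcomp Require Import ring lra.
Import Order.TTheory GRing.Theory Num.Theory numFieldNormedType.Exports.
Set Implicit Arguments. Unset Strict Implicit. Unset Printing Implicit Defensive.
Local Open Scope classical_set_scope.
Local Open Scope ring_scope.

Lemma compact_ultra_cvg (T : topologicalType) (I : Type) (U : set_system I)
  (UU : UltraFilter U) (Q : set T) (f : I -> T) :
  compact Q -> (forall i, Q (f i)) -> exists2 x, Q x & f @ U --> x.
Proof.
move=> cQ Qf.
have fQ : (f @ U) Q by apply: (@filterE _ U).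
have PF : ProperFilter (f @ U) by exact: fmap_proper_filter.
have [x [Qx clx]] := cQ _ PF fQ.
exists x => // A Ax.
case: (in_ultra_setVsetC (f @^-1` A) UU) => // nA.
by have [y [/= ? ?]] := clx (~` A) _ nA Ax.
Qed.

Section TvsLimits.
Variables (R : numDomainType) (E : tvsType R) (I : Type) (F : set_system I).
Context {FF : Filter F}.

Lemma tvs_cvgD (f g : I -> E) a b :
  f @ F --> a -> g @ F --> b -> (fun i => f i + g i) @ F --> a + b.
Proof.
move=> fa gb; apply: (@continuous2_cvg _ _ _ _ F FF _ _ (fun x y : E => x + y)) => //.
exact: (@add_continuous E (a, b)).
Qed.

Lemma tvs_cvgB (f g : I -> E) a b :
  f @ F --> a -> g @ F --> b -> (fun i => f i - g i) @ F --> a - b.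
Proof.
move=> fa gb; apply: (@continuous2_cvg _ _ _ _ F FF _ _ (fun x y : E => x - y)) => //.
exact: (@sub_continuous E (a, b)).
Qed.

Lemma tvs_cvgZ (t : I -> R^o) (f : I -> E) (k : R^o) a :
  t @ F --> k -> f @ F --> a -> (fun i => t i *: f i) @ F --> k *: a.
Proof.
move=> tk fa; apply: (@continuous2_cvg _ _ _ _ F FF _ _ (fun (x : R^o) (y : E) => x *: y)) => //.
exact: (@scale_continuous R E (k, a)).
Qed.

End TvsLimits.

Lemma fixpoint_of_vanishing_displacement (R : realType) (E : tvsType R)
  (I : Type) (U : set_system I) (UU : UltraFilter U)
  (Q : set E) (b : E -> E) (q : I -> E) (p : E) (eps : I -> R) :
  hausdorff_space E -> compact Q -> {within Q, continuous b} ->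
  (forall i, Q (q i)) -> Q p -> q @ U --> p -> eps @ U --> 0 ->
  (\forall i \near U, exists t u v,
     [/\ Q u, Q v, 0 <= t <= eps i & b (q i) = q i + t *: (u - v)]) ->
  b p = p.
Proof.
move=> hE cQ bc Qq Qp qp eps0 hb.
pose good i (w : R * E * E) :=
  [/\ Q w.1.2, Q w.2, 0 <= w.1.1 <= eps i & b (q i) = q i + w.1.1 *: (w.1.2 - w.2)].
have /choice[w hw] : forall i, exists w : R * E * E,
    [/\ Q w.1.2, Q w.2 & (exists w, good i w) -> good i w].
  move=> i; have [[w gw]|no] := pselect (exists w, good i w).
    by exists w; case: (gw) => Qu Qv _ _; split.
  by exists (0, p, p); split => // /no.
have wgood : \forall i \near U, good i (w i).
  by apply: filterS hb => i [t [u [v gi]]]; have [_ _] := hw i; apply; exists (t, u, v).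
have [u Qu wu] : exists2 u, Q u & (fun i => (w i).1.2) @ U --> u.
  by apply: compact_ultra_cvg => // i; case: (hw i).
have [v Qv wv] : exists2 v, Q v & (fun i => (w i).2) @ U --> v.
  by apply: compact_ultra_cvg => // i; case: (hw i).
have t0 : (fun i => (w i).1.1) @ U --> (0 : R^o).
  apply: (@squeeze_cvgr _ _ _ _ (fun _ => 0) eps) => //; last exact: cvg_cst.
  by apply: filterS wgood => i [_ _ ti _].
have lim_moved : (fun i => q i + (w i).1.1 *: ((w i).1.2 - (w i).2)) @ U --> p.
  rewrite -[p]addr0 -(scale0r (u - v)).
  by apply: tvs_cvgD => //; apply: tvs_cvgZ => //; exact: tvs_cvgB.
have lim_image : (fun i => b (q i)) @ U --> b p.
  apply: (cvg_comp q b (G := within Q (nbhs p))); last first.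
    exact: (proj1 (@subspace_continuousP _ Q _ b) bc p Qp).
  by move=> A /qp; apply: (@filterS _ U) => i /= /(_ (Qq i)).
have PF : ProperFilter ((fun i => q i + (w i).1.1 *: ((w i).1.2 - (w i).2)) @ U).
  exact: fmap_proper_filter.
apply: (@cvg_unique E hE _ PF) => //.
apply: cvg_trans lim_image; apply: near_eq_cvg.
by apply: filterS wgood => i [_ _ _ ->].
Qed.

Definition avg (R : numFieldType) (E : lmodType R) (T : Type) (f : T -> E) (s : seq T) : E :=
  (size s)%:R^-1 *: \sum_(x <- s) f x.

Lemma avg_cons (R : numFieldType) (E : lmodType R) (T : Type) (f : T -> E)
    (x : T) (s : seq T) :
  (0 < size s)%N ->
  avg f (x :: s) = (size s).+1%:R^-1 *: f x + (1 - (size s).+1%:R^-1) *: avg f s.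
Proof.
move=> s0; rewrite /avg big_cons scalerDr scalerA; congr (_ + _ *: _).
have m0 : (size s)%:R != 0 :> R by rewrite pnatr_eq0 -lt0n.
have m1 : (size s).+1%:R != 0 :> R by rewrite pnatr_eq0.
by rewrite /= -addn1 natrD in m1 *; field; rewrite m0 m1.
Qed.

Lemma convex_avg (R : realType) (E : tvsType R) (Q : set E) (T : Type)
    (f : T -> E) (s : seq T) :
  convex_set (Q : set (convex_lmodType E)) -> (forall x, Q (f x)) ->
  (0 < size s)%N -> Q (avg f s).
Proof.
move=> cQ Qf; elim: s => // x [_ _|y s IH _].
  by rewrite /avg big_seq1 invr1 scale1r.
rewrite avg_cons //.
set t := _^-1; have t0 : 0 <= t by rewrite invr_ge0.
have t1 : t <= 1 by rewrite invf_le1 ?ler1n.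
have := cQ (f x) (avg f (y :: s)) (Itv01 t0 t1) (mem_set (Qf x)) (mem_set (IH isT)).
by rewrite inE.
Qed.

Lemma affine_avg (R : realType) (E : tvsType R) (Q : set E) (T : Type)
    (f : T -> E) (b : E -> E) (s : seq T) :
  convex_set (Q : set (convex_lmodType E)) -> (forall x, Q (f x)) ->
  affine_on Q b -> (0 < size s)%N -> b (avg f s) = avg (b \o f) s.
Proof.
move=> cQ Qf bA; elim: s => // x [_ _|y s IH _].
  by rewrite /avg !big_seq1 invr1 !scale1r.
have t01 : 0 <= ((size (y :: s)).+1%:R^-1 : R) <= 1.
  by rewrite invr_ge0 ler0n invf_le1 ?ler1n.
rewrite [RHS]avg_cons // -IH // avg_cons //.
exact: bA (Qf x) (convex_avg (s := y :: s) cQ Qf isT) t01.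
Qed.

Lemma subexp_growth_almost_invariant (R : realType) (N : R -> nat) (c eps : R) :
  (forall r, 0 <= r -> (0 < N r)%N) ->
  (fun r => ln (N r)%:R / r) @ +oo --> 0 -> 0 < c -> 0 < eps ->
  exists2 r, 0 <= r & (N (r + c))%:R <= (1 + eps) * (N r)%:R.
Proof.
move=> N_gt0 hlim c0 eps0; apply: contrapT => no_step.
have eps_gt1 : 1 < 1 + eps by rewrite ltrDl.
have eps_gt0 : 0 < 1 + eps by rewrite (lt_trans ltr01).
have step r : 0 <= r -> (1 + eps) * (N r)%:R < (N (r + c))%:R.
  by move=> r0; rewrite ltNge; apply/negP => h; apply: no_step; exists r.
have geom k : (1 + eps) ^+ k <= (N (k%:R * c))%:R.
  elim: k => [|k IH]; first by rewrite expr0 mul0r ler1n N_gt0.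
  rewrite exprS -natr1 [(_ + 1) * c]mulrDl mul1r.
  apply: (le_trans _ (ltW (step _ _))); last by rewrite mulr_ge0 // ltW.
  by rewrite ler_pM2l.
(* Otherwise N (k c) >= (1 + eps)^k, and ln N r / r stays above ln (1 + eps) / c. *)
set d := ln (1 + eps) / c.
have d0 : 0 < d by rewrite divr_gt0 // ln_gt0.
have [M [_ HM]] := @cvgr_dist_lt _ _ _ _ _ _ _ hlim d d0.
have [k Mk] : exists k : nat, M < k.+1%:R * c.
  have [K _ hK] := nbhs_infty_gtr (M / c).
  by exists K; rewrite -ltr_pdivrMr //; exact: hK (leqnSn K).
have := HM _ Mk; rewrite sub0r normrN.
have kc0 : 0 < k.+1%:R * c by rewrite mulr_gt0.
have N1 : 1 <= (N (k.+1%:R * c))%:R :> R by rewrite ler1n N_gt0 // ltW.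
rewrite ger0_norm; last by rewrite divr_ge0 ?ln_ge0 // ltW.
rewrite ltNge => /negP; apply.
rewrite /d ler_pdivlMr // mulrCA divfK ?gt_eqF // [_ * ln _]mulr_natl.
by rewrite -lnXn // ler_ln ?posrE ?exprn_gt0 // ltr0n N_gt0 // ltW.
Qed.

Section CosetOrbit.
Variables (G : groupType) (H : set G).
Hypothesis hH : is_subgroup H.

Lemma rcoset_self (x : G) : rcoset H x x.
Proof. by exists 1%g; [case: hH | rewrite mul1g]. Qed.

Lemma rcoset_eq_mulV (x y : G) : rcoset H x = rcoset H y -> H (x * y^-1)%g.
Proof.
move=> e; have := rcoset_self x; rewrite e => -[h Hh <-].
by rewrite -mulgA mulgV mulg1.
Qed.

Definition rtrans (g : G) (C : set G) : set G := [set y | C (y * g)%g].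

Lemma rtrans_rcoset (g x : G) : rtrans g (rcoset H x) = rcoset H (x * g^-1)%g.
Proof.
apply/seteqP; split => y /=.
  by move=> [h Hh e]; exists h => //; rewrite mulgA e -mulgA mulgV mulg1.
by move=> [h Hh <-]; exists h => //; rewrite -!mulgA mulVg mulg1.
Qed.

Lemma rtrans_inj (g : G) : injective (rtrans g).
Proof.
have rtransK C : rtrans g^-1 (rtrans g C) = C.
  by apply/seteqP; split => y; rewrite /rtrans /= -mulgA mulVg mulg1.
by move=> C1 C2 e; rewrite -(rtransK C1) e rtransK.
Qed.

Variables (R : realType) (E : tvsType R) (Q : set E) (a : G -> E -> E) (q0 : E).
Hypotheses (ha : affine_action Q a) (Qq0 : Q q0).
Hypothesis fixq0 : forall h, H h -> a h q0 = q0.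

(* The orbit map Hx |-> x^-1 q0, well defined because H fixes q0; sets that are
   not right cosets are sent to q0. *)
Definition coset_orbit (C : set G) : E :=
  a ((xget 1%g (fun x => C = rcoset H x))^-1)%g q0.

Lemma coset_orbitE (x : G) : coset_orbit (rcoset H x) = a (x^-1)%g q0.
Proof.
rewrite /coset_orbit; set y := xget _ _.
have /rcoset_eq_mulV Hxy : rcoset H x = rcoset H y.
  by apply: (xgetPex 1%g (P := fun z => rcoset H x = rcoset H z)); exists x.
case: ha => _ _ aM _ _.
by rewrite -{2}(fixq0 Hxy) -aM // mulgA mulVg mul1g.
Qed.

Lemma coset_orbitQ (C : set G) : Q (coset_orbit C).
Proof. by case: ha => aQ _ _ _ _; exact: aQ. Qed.

Lemma coset_orbit_rtrans (g x : G) :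
  coset_orbit (rtrans g (rcoset H x)) = a g (coset_orbit (rcoset H x)).
Proof. by case: ha => _ _ aM _ _; rewrite rtrans_rcoset !coset_orbitE -aM // invgM invgK. Qed.

Hypothesis cQ : convex_set (Q : set (convex_lmodType E)).

Lemma sum_coset_orbit_scaled (P : {fset (set G)}) :
  exists2 u, Q u & (#|` P|)%:R *: u = \sum_(C <- P) coset_orbit C.
Proof.
have [P0|P_gt0] := posnP #|` P|.
  by exists q0 => //; rewrite P0 scale0r; move/size0nil: P0 => ->; rewrite big_nil.
exists (avg coset_orbit P); first exact: convex_avg coset_orbitQ P_gt0.
by rewrite /avg scalerA divff ?scale1r // pnatr_eq0 -lt0n.
Qed.

(* Translation by g exchanges the cosets of A outside g A for those of g A outside A,
   and there are at most #|D| - #|A| of the latter. *)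
Lemma avg_coset_orbit_translate (g : G) (A D : {fset (set G)}) :
  (0 < #|` A|)%N ->
  (forall C, C \in A -> exists x, C = rcoset H x) ->
  (forall C, C \in A -> rtrans g C \in D) -> (A `<=` D)%fset ->
  exists k : nat, exists u v, [/\ Q u, Q v, (k <= #|` D| - #|` A|)%N &
    a g (avg coset_orbit A) = avg coset_orbit A + (k%:R / (#|` A|)%:R) *: (u - v)].
Proof.
move=> A_gt0 A_cosets AgD AD.
set B := [fset rtrans g C | C in A]%fset.
have cardB : #|` B| = #|` A| by rewrite card_imfset //=; exact: rtrans_inj.
have aA : a g (avg coset_orbit A) = (#|` A|)%:R^-1 *: \sum_(C <- B) coset_orbit C.
  rewrite (affine_avg cQ coset_orbitQ _ A_gt0); last by case: ha.
  rewrite /avg big_imfset /=; last by move=> ? ? _ _; exact: rtrans_inj.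
  congr (_ *: _); apply: eq_big_seq => C CA /=.
  by have [x ->] := A_cosets C CA; rewrite coset_orbit_rtrans.
have sum_split (X Y : {fset (set G)}) : \sum_(C <- X) coset_orbit C =
    \sum_(C <- (X `&` Y)%fset) coset_orbit C + \sum_(C <- (X `\` Y)%fset) coset_orbit C.
  rewrite (big_fsetID _ (fun C => C \in Y) X); congr (_ + _); apply: eq_fbigl => C;
  by rewrite !inE andbC.
have [u Qu hu] := sum_coset_orbit_scaled (B `\` A)%fset.
have [v Qv hv] := sum_coset_orbit_scaled (A `\` B)%fset.
exists #|` (B `\` A)%fset|, u, v; split => //.
  rewrite -cardfsDS //; apply: fsubset_leq_card; apply/fsubsetP => C.
  by rewrite !inE => /andP[-> /imfsetP[C' /= C'A ->]]; rewrite AgD.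
have cardD : #|` (A `\` B)%fset| = #|` (B `\` A)%fset| by rewrite !cardfsD cardB fsetIC.
rewrite aA /avg (sum_split B A) (sum_split A B) fsetIC -hu -cardD -hv.
rewrite [_%:R / _]mulrC -scalerA -scalerDr; congr (_ *: _).
by rewrite scalerBr -addrA [_ *: v + _]addrC subrK.
Qed.

End CosetOrbit.

Section CosetBalls.
Variables (R : realType) (G : groupType) (H : set G) (l : G -> R).
Hypotheses (hH : is_subgroup H) (hl : length_function H l).
Hypothesis ball_fin : forall r, 0 <= r -> finite_set (ball_cosets H l r).

Definition coset_ball (r : R) : {fset (set G)} := fset_set (ball_cosets H l r).

Lemma mem_coset_ball (r : R) (C : set G) :
  0 <= r -> C \in coset_ball r <-> ball_cosets H l r C.
Proof. by move=> r0; rewrite in_fset_set ?in_setE //; exact: ball_fin. Qed.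

Lemma growth_gt0 (r : R) : 0 <= r -> (0 < growth H l r)%N.
Proof.
case: hl => l1 _ _ _ _ r0; rewrite /growth -/(coset_ball r) (cardfsD1 (rcoset H 1%g)).
by have /mem_coset_ball -> : ball_cosets H l r (rcoset H 1%g) by exists 1%g; rewrite ?l1.
Qed.

Lemma coset_ball_subset (r s : R) : 0 <= r -> r <= s -> (coset_ball r `<=` coset_ball s)%fset.
Proof.
move=> r0 rs; apply/fsubsetP => C /(mem_coset_ball _ r0) [x lx ->].
by apply/mem_coset_ball; [exact: le_trans rs | exists x => //; exact: le_trans rs].
Qed.

Lemma rtrans_coset_ball (g : G) (r : R) (C : set G) :
  0 <= r -> C \in coset_ball r -> rtrans g C \in coset_ball (r + l g).
Proof.
case: hl => _ l0 lV lM _ r0 /(mem_coset_ball _ r0) [x lx ->].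
apply/mem_coset_ball; first by rewrite addr_ge0.
exists (x * g^-1)%g; last exact: rtrans_rcoset.
by apply: le_trans (lM _ _) _; rewrite lV lerD2r.
Qed.

Variables (E : tvsType R) (Q : set E) (a : G -> E -> E) (q0 : E).
Hypotheses (ha : affine_action Q a) (Qq0 : Q q0).
Hypothesis fixq0 : forall h, H h -> a h q0 = q0.
Hypothesis cQ : convex_set (Q : set (convex_lmodType E)).

Lemma avg_coset_ball_translate (g : G) (r c eps : R) :
  0 <= r -> l g <= c ->
  (growth H l (r + c))%:R <= (1 + eps) * (growth H l r)%:R ->
  exists t u v, [/\ Q u, Q v, 0 <= t <= eps &
    a g (avg (coset_orbit H a q0) (coset_ball r)) =
    avg (coset_orbit H a q0) (coset_ball r) + t *: (u - v)].
Proof.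
case: hl => _ l0 _ _ _ r0 lgc growth_le.
have c0 : 0 <= c by exact: le_trans (l0 g) lgc.
have rc0 : 0 <= r + c by rewrite addr_ge0.
have A_cosets C : C \in coset_ball r -> exists x, C = rcoset H x.
  by move=> /(mem_coset_ball _ r0) [x _ ->]; exists x.
have AgD C : C \in coset_ball r -> rtrans g C \in coset_ball (r + c).
  move=> /(rtrans_coset_ball g r0); apply/fsubsetP/coset_ball_subset.
    by rewrite addr_ge0.
  by rewrite lerD2l.
have [k [u [v [Qu Qv k_le ->]]]] := avg_coset_orbit_translate hH ha Qq0 fixq0 cQ
  (growth_gt0 r0) A_cosets AgD (coset_ball_subset r0 (ler_wpDr c0 (lexx r))).
exists (k%:R / (growth H l r)%:R), u, v; split => //.
have Nr0 : 0 < (growth H l r)%:R :> R by rewrite ltr0n growth_gt0.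
have Nr_le : (growth H l r <= growth H l (r + c))%N.
  by apply: fsubset_leq_card; apply: coset_ball_subset; rewrite ?lerDl.
have kR : k%:R <= (growth H l (r + c))%:R - (growth H l r)%:R :> R.
  by rewrite -natrB // ler_nat.
rewrite divr_ge0 //= ler_pdivrMr //; nra.
Qed.

End CosetBalls.

Theorem proposition4p5 (R : realType) (G : groupType) (H S : set G) :
  hecke_pair H -> finite_set S -> generates_pair H S ->
  forall l : G -> R, length_function H l -> subexponential_growth H l ->
  amenable_pair R H.
Proof.
move=> [hH _] _ _ l hl [ball_fin hlim] E hE Q cQ cvxQ a ha [q0 Qq0 fixq0].
have growth_pos : forall r, 0 <= r -> (0 < growth H l r)%N := growth_gt0 hl ball_fin.
have radius n : exists r : R, 0 <= r /\
    (growth H l (r + n.+1%:R))%:R <= (1 + n.+1%:R^-1) * (growth H l r)%:R :> R.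
  have eps0 : (0 : R) < n.+1%:R^-1 by rewrite invr_gt0.
  have [r r0 hr] := subexp_growth_almost_invariant growth_pos hlim (ltr0Sn R n) eps0.
  by exists r.
have [rs rsP] := choice radius.
pose q n := avg (coset_orbit H a q0) (coset_ball H l (rs n)).
have Qq n : Q (q n).
  by apply: convex_avg cvxQ (coset_orbitQ _ ha Qq0) _; exact: growth_pos (rsP n).1.
have [U [UU oo_U]] := @ultraFilterLemma nat \oo _.
have [p Qp qp] := compact_ultra_cvg UU cQ Qq.
exists p => // g.
apply: (fixpoint_of_vanishing_displacement UU hE cQ _ Qq Qp qp (eps := fun n => n.+1%:R^-1)).
- by case: ha.
- by apply: cvg_trans cvg_harmonic => P /oo_U.
- apply: oo_U; apply: filterS (nbhs_infty_ger (l g)) => n lgn.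
  apply: avg_coset_ball_translate (rsP n).1 _ (rsP n).2 => //.
  by apply: le_trans lgn _; rewrite ler_nat.
Qed.
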